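(* Let $X=-x\,f'(y)\frac{\partial}{\partial x}+f(y)\frac{\partial}{\partial y}$ be (the germ at the origin of) a smooth vector field on $\mathbb{R}^2$ with $f$ smooth, and suppose $X(0,0)=0$, i.e. $f(0)=0$. Then the eigenvalues of the linearization $DX(0,0)$ are $-f'(0)$ and $f'(0)$; hence the origin is a hyperbolic singularity of $X$ if and only if $f'(0)\neq 0$. In that case, with $a=f'(0)$, there is a germ at the origin of a smooth diffeomorphism $\psi$ of $(\mathbb{R}^2,0)$ with $\psi^*(x\,dy)=x\,dy$ and $$\psi_*X=-ax\frac{\partial}{\partial x}+ay\frac{\partial}{\partial y}$$ near the origin.
   Context: Coordinates $(x,y)$ on $\mathbb{R}^2$; $x\,dy$ is the Liouville form. The vector fields of this form are exactly the smooth vector fields preserving $x\,dy$. A zero $p$ of a vector field is hyperbolic if $DX(p)$ has no eigenvalue with zero real part. $\psi_*$ denotes pushforward of vector fields and $\psi^*$ pullback of forms. ''Smooth'' means $C^\infty$. *)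

From Stdlib Require Import Reals.
Open Scope R_scope.

Definition R2 := (R * R)%type.
Definition origin : R2 := (0, 0).

Definition has_pdx (g : R2 -> R) (p : R2) (l : R) : Prop :=
  derivable_pt_lim (fun t => g (t, snd p)) (fst p) l.
Definition has_pdy (g : R2 -> R) (p : R2) (l : R) : Prop :=
  derivable_pt_lim (fun t => g (fst p, t)) (snd p) l.

Definition open2 (U : R2 -> Prop) : Prop :=
  forall p, U p -> exists eps, 0 < eps /\
    forall q, Rabs (fst q - fst p) < eps -> Rabs (snd q - snd p) < eps -> U q.

Definition cont2_on (U : R2 -> Prop) (g : R2 -> R) : Prop :=
  forall p, U p -> forall eps, 0 < eps -> exists del, 0 < del /\
    forall q, U q -> Rabs (fst q - fst p) < del -> Rabs (snd q - snd p) < del ->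
      Rabs (g q - g p) < eps.

Definition smooth2_on (U : R2 -> Prop) (g : R2 -> R) : Prop :=
  exists D : nat -> nat -> R2 -> R,
    (forall p, U p -> D 0%nat 0%nat p = g p) /\
    forall i j, cont2_on U (D i j) /\
      forall p, U p -> has_pdx (D i j) p (D (S i) j p) /\
                       has_pdy (D i j) p (D i (S j) p).

Definition smooth_map_on (U : R2 -> Prop) (F : R2 -> R2) : Prop :=
  smooth2_on U (fun p => fst (F p)) /\ smooth2_on U (fun p => snd (F p)).

Definition smooth1 (f : R -> R) : Prop :=
  exists D : nat -> R -> R, (forall x, D 0%nat x = f x) /\
    forall n x, derivable_pt_lim (D n) x (D (S n) x).

Record Mat2 := mkMat2 { m11 : R; m12 : R; m21 : R; m22 : R }.

Definition is_jacobian (F : R2 -> R2) (p : R2) (M : Mat2) : Prop :=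
  has_pdx (fun q => fst (F q)) p (m11 M) /\ has_pdy (fun q => fst (F q)) p (m12 M) /\
  has_pdx (fun q => snd (F q)) p (m21 M) /\ has_pdy (fun q => snd (F q)) p (m22 M).

Definition mat_apply (M : Mat2) (v : R2) : R2 :=
  (m11 M * fst v + m12 M * snd v, m21 M * fst v + m22 M * snd v).

(** Complex numbers as pairs (re, im), and complex eigenvalues of a real
    2x2 matrix: lam is an eigenvalue iff M v = lam v for some nonzero v in C^2. *)
Definition C := (R * R)%type.
Definition Cre (z : C) := fst z.
Definition Cadd (z w : C) : C := (fst z + fst w, snd z + snd w).
Definition Cmul (z w : C) : C :=
  (fst z * fst w - snd z * snd w, fst z * snd w + snd z * fst w).
Definition RtoC (r : R) : C := (r, 0).

Definition eigenvalue (M : Mat2) (lam : C) : Prop :=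
  exists v1 v2 : C, (v1 <> (0,0) \/ v2 <> (0,0)) /\
    Cadd (Cmul (RtoC (m11 M)) v1) (Cmul (RtoC (m12 M)) v2) = Cmul lam v1 /\
    Cadd (Cmul (RtoC (m21 M)) v1) (Cmul (RtoC (m22 M)) v2) = Cmul lam v2.

Definition hyperbolic_zero (X : R2 -> R2) (p : R2) : Prop :=
  X p = (0, 0) /\
  exists M, is_jacobian X p M /\ forall lam, eigenvalue M lam -> Cre lam <> 0.

Definition diffeo_germ (U : R2 -> Prop) (psi : R2 -> R2) : Prop :=
  open2 U /\ U origin /\ psi origin = origin /\ smooth_map_on U psi /\
  exists (V : R2 -> Prop) (phi : R2 -> R2),
    open2 V /\ smooth_map_on V phi /\
    (forall p, U p -> V (psi p) /\ phi (psi p) = p) /\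
    (forall q, V q -> U (phi q) /\ psi (phi q) = q).

(** psi^*(x dy) = x dy on U: psi^*(x dy) = psi_1 d(psi_2)
    = psi_1 (d_x psi_2) dx + psi_1 (d_y psi_2) dy. *)
Definition preserves_liouville_on (U : R2 -> Prop) (psi : R2 -> R2) : Prop :=
  forall p, U p -> forall c d,
    has_pdx (fun q => snd (psi q)) p c -> has_pdy (fun q => snd (psi q)) p d ->
    fst (psi p) * c = 0 /\ fst (psi p) * d = fst p.

(** (psi_* X)(psi p) = D psi(p) X(p) equals Y(psi p) for all p in U. *)
Definition pushforward_eq_on (U : R2 -> Prop) (psi X Y : R2 -> R2) : Prop :=
  forall p, U p -> forall J, is_jacobian psi p J -> mat_apply J (X p) = Y (psi p).

(* Hadamard's lemma writes f y = y g y with g 0 = a, and g y = a + y w y.  Then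
   h y = y exp (Q y), with Q' = - w / g and Q 0 = 0, solves f h' = a h and has
   h' = a exp Q / g > 0 near 0, so h is a local diffeomorphism of the line
   conjugating f d/dy to a y d/dy.  Its cotangent lift (x, y) |-> (x / h' y, h y)
   preserves x dy, and differentiating f h' = a h shows that it also turns the
   x-component - x f' y into - a x. *)

From Pilot Require Import Defs.
From Stdlib Require Import Reals Lra ClassicalEpsilon Ranalysis5.
From Coquelicot Require Import Coquelicot.
Open Scope R_scope.

Definition open1 (I : R -> Prop) : Prop :=
  forall x, I x -> exists e, 0 < e /\ forall y, Rabs (y - x) < e -> I y.

Definition interval_oo (lo hi : R) : R -> Prop := fun y => lo < y < hi.

Lemma interval_oo_open lo hi : open1 (interval_oo lo hi).
Proof.
  intros x Hx. exists (Rmin (x - lo) (hi - x)). unfold interval_oo in *. split.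
  - apply Rmin_glb_lt; lra.
  - intros y Hy. apply Rabs_def2 in Hy.
    assert (Rmin (x - lo) (hi - x) <= x - lo) by apply Rmin_l.
    assert (Rmin (x - lo) (hi - x) <= hi - x) by apply Rmin_r. lra.
Qed.

Lemma derivable_pt_lim_replace f x l l' :
  derivable_pt_lim f x l -> l = l' -> derivable_pt_lim f x l'.
Proof. intros H ->; exact H. Qed.

Lemma derivable_pt_lim_ext_on I f g x l : open1 I -> (forall y, I y -> f y = g y) ->
  I x -> derivable_pt_lim f x l -> derivable_pt_lim g x l.
Proof.
  intros HI Hfg Hx Hd. destruct (HI x Hx) as [e [He HIe]].
  apply (derivable_pt_lim_locally_ext f g x (x - e) (x + e)); [lra| |exact Hd].
  intros z Hz; apply Hfg, HIe; apply Rabs_def1; lra.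
Qed.

Lemma derivable_pt_lim_scal_comp g l t c u : derivable_pt_lim g (t * u) l ->
  derivable_pt_lim (fun z => c * g (t * z)) u (c * (t * l)).
Proof.
  intros H.
  assert (Ht : derivable_pt_lim (fun z => t * z) u t).
  { apply derivable_pt_lim_replace with (t * 1); [|ring].
    apply (derivable_pt_lim_scal id), derivable_pt_lim_id. }
  apply derivable_pt_lim_replace with (c * (l * t)); [|ring].
  apply (derivable_pt_lim_scal (fun z => g (t * z))), (derivable_pt_lim_comp _ _ _ _ _ Ht H).
Qed.

Lemma derivable_pt_lim_Rinv_comp f x l : derivable_pt_lim f x l -> f x <> 0 ->
  derivable_pt_lim (fun y => / f y) x (- l / f x ^ 2).
Proof.
  intros H Hn. apply is_derive_Reals, is_derive_inv; [apply is_derive_Reals|]; auto.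
Qed.

Lemma continuity_pt_of_derivable_pt_lim f x l :
  derivable_pt_lim f x l -> continuity_pt f x.
Proof. intros H. apply derivable_continuous_pt. exists l; exact H. Qed.

(* Only the existence of [n] successive derivatives on [I] is recorded; continuity
   comes for free once all orders are required. *)
Fixpoint Cn (I : R -> Prop) (n : nat) (f : R -> R) : Prop :=
  match n with
  | O => True
  | S m => exists f', (forall x, I x -> derivable_pt_lim f x (f' x)) /\ Cn I m f'
  end.

Definition smooth_on (I : R -> Prop) (f : R -> R) : Prop := forall n, Cn I n f.

Definition deriv_tower (D : nat -> R -> R) : Prop :=
  forall n x, derivable_pt_lim (D n) x (D (S n) x).

Lemma Cn_ext_on I n f g : open1 I -> (forall y, I y -> f y = g y) -> Cn I n f -> Cn I n g.
Proof.
  intros HI Hfg. destruct n as [|n]; [easy|].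
  intros [f' [Hd Hc]]. exists f'; split; auto.
  intros x Hx; apply (derivable_pt_lim_ext_on I f g); auto.
Qed.

Lemma Cn_pred I n f : Cn I (S n) f -> Cn I n f.
Proof.
  revert f; induction n as [|n IH]; [easy|].
  intros f [f' [Hd Hc]]. exists f'; split; auto.
Qed.

Lemma Cn_subset (I I' : R -> Prop) n f : (forall x, I' x -> I x) -> Cn I n f -> Cn I' n f.
Proof.
  intros Hs; revert f; induction n as [|n IH]; [easy|].
  intros f [f' [Hd Hc]]; exists f'; split; auto.
Qed.

Lemma Cn_const I n c : Cn I n (fun _ => c).
Proof.
  revert c; induction n as [|n IH]; [easy|]. intros c.
  exists (fun _ => 0); split; auto. intros; apply derivable_pt_lim_const.
Qed.

Lemma Cn_plus I n f g : Cn I n f -> Cn I n g -> Cn I n (fun x => f x + g x).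
Proof.
  revert f g; induction n as [|n IH]; [easy|].
  intros f g [f' [Hf Cf]] [g' [Hg Cg]]. exists (fun x => f' x + g' x); split; auto.
  intros x Hx. apply (derivable_pt_lim_plus f g x _ _ (Hf x Hx) (Hg x Hx)).
Qed.

Lemma Cn_opp I n f : Cn I n f -> Cn I n (fun x => - f x).
Proof.
  revert f; induction n as [|n IH]; [easy|].
  intros f [f' [Hf Cf]]. exists (fun x => - f' x); split; auto.
  intros x Hx. apply (derivable_pt_lim_opp f x _ (Hf x Hx)).
Qed.

Lemma Cn_mult I n f g : Cn I n f -> Cn I n g -> Cn I n (fun x => f x * g x).
Proof.
  revert f g; induction n as [|n IH]; [easy|].
  intros f g Hf Hg.
  assert (Cf := Cn_pred I n f Hf). assert (Cg := Cn_pred I n g Hg).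
  destruct Hf as [f' [Hf Cf']]. destruct Hg as [g' [Hg Cg']].
  exists (fun x => f' x * g x + f x * g' x); split.
  - intros x Hx. apply (derivable_pt_lim_mult f g x _ _ (Hf x Hx) (Hg x Hx)).
  - apply Cn_plus; apply IH; auto.
Qed.

Lemma Cn_comp (I J : R -> Prop) n f G : Cn I n f -> Cn J n G ->
  (forall y, J y -> I (G y)) -> Cn J n (fun y => f (G y)).
Proof.
  revert f G; induction n as [|n IH]; [easy|].
  intros f G Hf HG HJI.
  assert (CG := Cn_pred J n G HG).
  destruct Hf as [f' [Hf Cf]]. destruct HG as [G' [HG CG']].
  exists (fun y => f' (G y) * G' y); split.
  - intros y Hy. apply (derivable_pt_lim_comp G f y _ _ (HG y Hy) (Hf _ (HJI y Hy))).
  - apply Cn_mult; auto.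
Qed.

Lemma Cn_Rinv n : Cn (fun x => x <> 0) n Rinv.
Proof.
  induction n as [|n IH]; [easy|].
  exists (fun x => - (/ x * / x)); split.
  - intros x Hx. apply derivable_pt_lim_replace with (- 1 / x ^ 2); [|field; auto].
    apply (derivable_pt_lim_Rinv_comp (fun y => y)); [apply derivable_pt_lim_id|exact Hx].
  - apply Cn_opp, Cn_mult; auto.
Qed.

Lemma Cn_inv I n f : Cn I n f -> (forall x, I x -> f x <> 0) -> Cn I n (fun x => / f x).
Proof. intros Hf Hn. apply (Cn_comp (fun x => x <> 0) I n Rinv f); auto. apply Cn_Rinv. Qed.

Lemma Cn_exp I n : Cn I n exp.
Proof.
  induction n as [|n IH]; [easy|].
  exists exp; split; auto. intros; apply derivable_pt_lim_exp.
Qed.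

Lemma smooth_on_subset (I I' : R -> Prop) f :
  (forall x, I' x -> I x) -> smooth_on I f -> smooth_on I' f.
Proof. intros H Hf n. apply (Cn_subset I); auto. Qed.

Lemma smooth_on_tower I (D : nat -> R -> R) k : deriv_tower D -> smooth_on I (D k).
Proof.
  intros HD n. revert k. induction n as [|n IH]; [easy|].
  intros k. exists (D (S k)); split; auto.
Qed.

Lemma smooth_on_antiderivative I f f' :
  (forall x, I x -> derivable_pt_lim f x (f' x)) -> smooth_on I f' -> smooth_on I f.
Proof. intros Hd Hf' [|n]; [easy|]. exists f'; split; auto. Qed.

Lemma smooth_on_of_deriv_comp (I J : R -> Prop) F G :
  (forall y, J y -> derivable_pt_lim G y (F (G y))) -> smooth_on I F ->
  (forall y, J y -> I (G y)) -> smooth_on J G.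
Proof.
  intros HG HF HJI n. induction n as [|n IH]; [easy|].
  exists (fun y => F (G y)); split; auto. apply (Cn_comp I); auto.
Qed.

Definition deriv_choice (f : R -> R) (y : R) : R :=
  epsilon (inhabits 0) (fun l => derivable_pt_lim f y l).

Lemma smooth_on_deriv_choice I f : open1 I -> smooth_on I f ->
  smooth_on I (deriv_choice f) /\ forall y, I y -> derivable_pt_lim f y (deriv_choice f y).
Proof.
  intros HI Hf.
  assert (Hd : forall y, I y -> derivable_pt_lim f y (deriv_choice f y)).
  { intros y Hy. destruct (Hf 1%nat) as [f' [H1 _]].
    unfold deriv_choice; apply epsilon_spec. exists (f' y); auto. }
  split; auto. intros n. destruct (Hf (S n)) as [f' [H1 H2]].
  apply (Cn_ext_on I n f'); auto.
  intros y Hy; apply (uniqueness_limite f y); auto.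
Qed.

Lemma smooth_on_deriv_tower I f : open1 I -> smooth_on I f -> exists D : nat -> R -> R,
  (forall y, D O y = f y) /\ forall n y, I y -> derivable_pt_lim (D n) y (D (S n) y).
Proof.
  intros HI Hf. exists (fun n => Nat.iter n deriv_choice f).
  assert (HS : forall n, smooth_on I (Nat.iter n deriv_choice f)).
  { induction n as [|n IH]; [easy|]. apply (smooth_on_deriv_choice I); auto. }
  split; [reflexivity|]. intros n y Hy. apply (smooth_on_deriv_choice I); auto.
Qed.

Section Hadamard.

Variable D : nat -> R -> R.
Hypothesis HD : deriv_tower D.

Lemma tower_continuous k x : continuity_pt (D k) x.
Proof. eapply continuity_pt_of_derivable_pt_lim; apply HD. Qed.

Lemma moment_integrand_continuous k m u t :
  continuity_2d_pt (fun u v => v ^ m * D k (v * u)) u t.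
Proof.
  apply continuity_2d_pt_mult.
  - apply (continuity_1d_2d_pt_comp (fun v => v ^ m) (fun _ v => v)).
    + apply derivable_continuous_pt, derivable_pt_pow.
    + apply continuity_2d_pt_id2.
  - apply (continuity_1d_2d_pt_comp (D k) (fun u v => v * u)); [apply tower_continuous|].
    apply continuity_2d_pt_mult; [apply continuity_2d_pt_id2|apply continuity_2d_pt_id1].
Qed.

Lemma moment_integrand_continuous_pt k m u t :
  continuity_pt (fun t => t ^ m * D k (t * u)) t.
Proof.
  apply continuity_pt_mult; [apply derivable_continuous_pt, derivable_pt_pow|].
  apply (continuity_pt_comp (fun t => t * u) (D k)); [|apply tower_continuous].
  apply continuity_pt_mult; [apply continuity_pt_id|].
  apply continuity_pt_const; intros ? ?; reflexivity.
Qed.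

Lemma moment_integrable k m u : ex_RInt (fun t => t ^ m * D k (t * u)) 0 1.
Proof.
  apply (@ex_RInt_continuous R_CompleteNormedModule). intros t _.
  apply continuity_pt_filterlim, moment_integrand_continuous_pt.
Qed.

(* [hadamard_quotient O x = (D O x - D O 0) / x] for [x <> 0]; the higher indices are
   its successive derivatives, by differentiation under the integral. *)
Definition hadamard_quotient (n : nat) (x : R) : R :=
  RInt (fun t => t ^ n * D (S n) (t * x)) 0 1.

Lemma hadamard_quotient_tower : deriv_tower hadamard_quotient.
Proof.
  intros n x. apply is_derive_Reals.
  assert (Hdu : forall u t, is_derive (fun z => t ^ n * D (S n) (t * z)) u
                                      (t ^ S n * D (S (S n)) (t * u))).
  { intros u t. apply is_derive_Reals.
    apply derivable_pt_lim_replace with (t ^ n * (t * D (S (S n)) (t * u))); [|simpl; ring].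
    apply derivable_pt_lim_scal_comp, HD. }
  unfold hadamard_quotient.
  replace (RInt (fun t => t ^ S n * D (S (S n)) (t * x)) 0 1)
    with (RInt (fun t => Derive (fun u => t ^ n * D (S n) (t * u)) x) 0 1).
  - apply (is_derive_RInt_param (fun u t => t ^ n * D (S n) (t * u))).
    + apply filter_forall. intros y t _. eexists; apply Hdu.
    + intros t _. eapply continuity_2d_pt_ext;
        [|apply (moment_integrand_continuous (S (S n)) (S n) x t)].
      intros u v. symmetry; apply is_derive_unique, Hdu.
    + apply filter_forall. intros y; apply moment_integrable.
  - apply RInt_ext. intros t _. apply is_derive_unique, Hdu.
Qed.

Lemma hadamard_quotient_spec x : D O x = D O 0 + x * hadamard_quotient O x.
Proof.
  assert (Hftc : is_RInt (fun t => x * (t ^ 0 * D 1%nat (t * x))) 0 1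
                   (minus (D O (1 * x)) (D O (0 * x)))).
  { apply (is_RInt_derive (fun t => D O (t * x))).
    - intros t _. apply is_derive_Reals.
      apply derivable_pt_lim_replace with (1 * (x * D 1%nat (t * x))); [|simpl; ring].
      apply (derivable_pt_lim_ext (fun z => 1 * D O (x * z))).
      { intros z; rewrite Rmult_1_l, Rmult_comm; reflexivity. }
      rewrite (Rmult_comm t x). apply (derivable_pt_lim_scal_comp (D O)), HD.
    - intros t _. apply continuity_pt_filterlim.
      apply continuity_pt_mult; [apply continuity_pt_const; intros ? ?; reflexivity|].
      apply moment_integrand_continuous_pt. }
  apply (@is_RInt_unique R_CompleteNormedModule) in Hftc.
  assert (Hscal := @RInt_scal R_CompleteNormedModule
                     (fun t => t ^ 0 * D 1%nat (t * x)) 0 1 x (moment_integrable _ _ _)).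
  unfold scal in Hscal; simpl in Hscal. unfold mult in Hscal; simpl in Hscal.
  unfold hadamard_quotient. simpl in *. rewrite <- Hscal, Hftc.
  unfold minus, plus, opp; simpl. rewrite Rmult_1_l, Rmult_0_l. ring.
Qed.

Lemma hadamard_quotient_0 : hadamard_quotient O 0 = D 1%nat 0.
Proof.
  unfold hadamard_quotient. rewrite (RInt_ext _ (fun _ => D 1%nat 0)).
  - rewrite RInt_const. unfold scal; simpl; unfold mult; simpl; ring.
  - intros t _. rewrite Rmult_0_r; simpl; ring.
Qed.

End Hadamard.

Lemma hadamard (D : nat -> R -> R) : deriv_tower D -> exists E, deriv_tower E /\
  (forall x, D O x = D O 0 + x * E O x) /\ E O 0 = D 1%nat 0.
Proof.
  intros HD. exists (hadamard_quotient D). split; [|split].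
  - apply hadamard_quotient_tower, HD.
  - apply hadamard_quotient_spec, HD.
  - apply hadamard_quotient_0.
Qed.

Lemma continuity_pt_sign_near g : continuity_pt g 0 -> g 0 <> 0 ->
  exists r, 0 < r /\ forall y, Rabs y < r -> 0 < g 0 * g y.
Proof.
  intros Hc Ha.
  assert (Hpos : 0 < Rabs (g 0) / 2) by (apply Rabs_pos_lt in Ha; lra).
  destruct (Hc _ Hpos) as [r [Hr H]]. exists r; split; auto.
  intros y Hy.
  assert (Habs : Rabs (g y - g 0) < Rabs (g 0) / 2).
  { destruct (Req_dec y 0) as [->|Hy0]; [rewrite Rminus_diag, Rabs_R0; lra|].
    apply (H y). split; [split; [exact I|auto]|]. simpl; unfold R_dist; rewrite Rminus_0_r; auto. }
  apply Rabs_def2 in Habs. destruct (Rle_or_lt 0 (g 0)).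
  - rewrite Rabs_right in Habs by lra. nra.
  - rewrite Rabs_left in Habs by lra. nra.
Qed.

Lemma RInt_derivable_on_interval (q : R -> R) r :
  (forall y, interval_oo (- r) r y -> continuity_pt q y) ->
  forall y, interval_oo (- r) r y -> derivable_pt_lim (fun z => RInt q 0 z) y (q y).
Proof.
  intros Hq y Hy. apply is_derive_Reals, (@is_derive_RInt R_CompleteNormedModule q _ 0).
  - destruct (interval_oo_open _ _ y Hy) as [e [He HJe]]. exists (mkposreal e He).
    intros b Hb. change (Rabs (b - y) < e) in Hb.
    apply (@RInt_correct R_CompleteNormedModule), (@ex_RInt_continuous R_CompleteNormedModule).
    intros z Hz. apply continuity_pt_filterlim, Hq.
    specialize (HJe b Hb). unfold interval_oo in *.
    destruct (Rle_or_lt 0 b).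
    + rewrite Rmin_left, Rmax_right in Hz by lra. lra.
    + rewrite Rmin_right, Rmax_left in Hz by lra. lra.
  - apply continuity_pt_filterlim, Hq, Hy.
Qed.

Lemma linearizing_coordinate (g w : R -> R) (a : R) : a <> 0 ->
  smooth_on (fun _ => True) g -> smooth_on (fun _ => True) w ->
  (forall y, g y = a + y * w y) ->
  exists r h hp, 0 < r /\ h 0 = 0 /\ smooth_on (interval_oo (- r) r) hp /\
    forall y, interval_oo (- r) r y ->
      derivable_pt_lim h y (hp y) /\ 0 < hp y /\ y * g y * hp y = a * h y.
Proof.
  intros Ha Hg Hw Hgw.
  assert (Hg0 : g 0 = a) by (rewrite Hgw; ring).
  destruct (continuity_pt_sign_near g) as [r [Hr Hag]]; [|congruence|].
  { destruct (Hg 1%nat) as [g' [Hg' _]]. eapply continuity_pt_of_derivable_pt_lim; apply Hg'; easy. }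
  rewrite Hg0 in Hag.
  set (J := interval_oo (- r) r).
  assert (HJg : forall y, J y -> 0 < a * g y) by (intros y Hy; apply Hag, Rabs_def1; apply Hy).
  assert (Hgn : forall y, J y -> g y <> 0).
  { intros y Hy Hgy. specialize (HJg y Hy). rewrite Hgy in HJg. lra. }
  assert (HgJ : smooth_on J g) by (apply (smooth_on_subset (fun _ => True)); auto).
  assert (HwJ : smooth_on J w) by (apply (smooth_on_subset (fun _ => True)); auto).
  set (q := fun y => - w y * / g y).
  assert (Hq : smooth_on J q) by (intros n; apply Cn_mult; [apply Cn_opp|apply Cn_inv]; auto).
  set (Q := fun y => RInt q 0 y).
  assert (HQ : forall y, J y -> derivable_pt_lim Q y (q y)).
  { apply RInt_derivable_on_interval. intros y Hy.
    destruct (Hq 1%nat) as [q' [Hq' _]]. eapply continuity_pt_of_derivable_pt_lim; eauto. }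
  assert (HQs : smooth_on J Q) by (apply (smooth_on_antiderivative J Q q); auto).
  set (E := fun y => exp (Q y)).
  assert (HE : forall y, J y -> derivable_pt_lim E y (E y * q y)).
  { intros y Hy. apply (derivable_pt_lim_comp Q exp); auto. apply derivable_pt_lim_exp. }
  assert (HEs : smooth_on J E) by (intros n; apply (Cn_comp (fun _ => True) J n exp Q); auto; apply Cn_exp).
  assert (HEp : forall y, 0 < E y) by (intros; apply exp_pos).
  exists r, (fun y => y * E y), (fun y => E y * a * / g y).
  split; [exact Hr|]. split; [ring|]. split.
  { intros n. apply Cn_mult; [apply Cn_mult; [apply HEs|apply Cn_const]|apply Cn_inv; auto]. }
  intros y Hy. specialize (Hgn y Hy). split; [|split].
  - apply derivable_pt_lim_replace with (1 * E y + y * (E y * q y)).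
    + apply (derivable_pt_lim_mult id E); [apply derivable_pt_lim_id|auto].
    + replace a with (g y - y * w y) by (rewrite Hgw; ring). unfold q. field. exact Hgn.
  - replace (E y * a * / g y) with (E y * (a * g y) * / (g y * g y)) by (field; auto).
    specialize (HJg y Hy). specialize (HEp y).
    apply Rmult_lt_0_compat; [nra|]. apply Rinv_0_lt_compat. nra.
  - field. exact Hgn.
Qed.

Section IntervalInverse.

Variables (h hp : R -> R) (s : R).
Hypothesis Hs : 0 < s.
Hypothesis Hder : forall y, - s <= y <= s -> derivable_pt_lim h y (hp y).
Hypothesis Hpos : forall y, - s <= y <= s -> 0 < hp y.

Lemma increasing_of_pos_deriv x y : - s <= x -> x < y -> y <= s -> h x < h y.
Proof.
  intros H1 H2 H3. destruct (MVT_cor2 h hp x y H2) as [c [Hc1 Hc2]].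
  - intros c Hc; apply Hder; lra.
  - assert (0 < hp c) by (apply Hpos; lra). nra.
Qed.

Lemma le_of_pos_deriv x y : - s <= x -> x <= y -> y <= s -> h x <= h y.
Proof.
  intros H1 H2 H3. destruct (Req_dec x y) as [->|Hxy]; [lra|].
  left; apply increasing_of_pos_deriv; lra.
Qed.

Definition interval_inverse (v : R) : R :=
  epsilon (inhabits 0) (fun y => - s <= y <= s /\ h y = v).

Lemma interval_inverse_spec v : h (- s) <= v <= h s ->
  - s <= interval_inverse v <= s /\ h (interval_inverse v) = v.
Proof.
  intros Hv. unfold interval_inverse. apply epsilon_spec.
  destruct (f_interv_is_interv h (- s) s v) as [y Hy]; [lra|exact Hv| |eauto].
  intros y Hy. eapply continuity_pt_of_derivable_pt_lim; apply Hder, Hy.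
Qed.

Lemma interval_inverse_cancel y : - s <= y <= s -> interval_inverse (h y) = y.
Proof.
  intros Hy.
  destruct (interval_inverse_spec (h y)) as [Hi Hhi];
    [split; apply le_of_pos_deriv; lra|].
  destruct (Rtotal_order (interval_inverse (h y)) y) as [Hlt|[Heq|Hgt]]; auto.
  - apply (increasing_of_pos_deriv _ y) in Hlt; lra.
  - apply (increasing_of_pos_deriv y) in Hgt; lra.
Qed.

Lemma interval_maps y : interval_oo (- s) s y -> interval_oo (h (- s)) (h s) (h y).
Proof. intros [Hy1 Hy2]. split; apply increasing_of_pos_deriv; lra. Qed.

Lemma interval_inverse_maps v : interval_oo (h (- s)) (h s) v ->
  interval_oo (- s) s (interval_inverse v) /\ h (interval_inverse v) = v.
Proof.
  intros [Hv1 Hv2]. destruct (interval_inverse_spec v) as [Hi Hhi]; [lra|].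
  split; [|exact Hhi]. split.
  - destruct (Req_dec (interval_inverse v) (- s)) as [He|]; [|lra].
    rewrite He in Hhi. lra.
  - destruct (Req_dec (interval_inverse v) s) as [He|]; [|lra].
    rewrite He in Hhi. lra.
Qed.

Lemma interval_inverse_derivable v : interval_oo (h (- s)) (h s) v ->
  derivable_pt_lim interval_inverse v (/ hp (interval_inverse v)).
Proof.
  intros Hv. destruct (interval_inverse_maps v Hv) as [Hiv _].
  assert (Hlo : interval_inverse (h (- s)) = - s) by (apply interval_inverse_cancel; lra).
  assert (Hhi : interval_inverse (h s) = s) by (apply interval_inverse_cancel; lra).
  assert (Prf : forall u, interval_inverse (h (- s)) <= u <= interval_inverse (h s) ->
                          derivable_pt h u).
  { intros u Hu. exists (hp u). apply Hder. lra. }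
  assert (Prg : interval_inverse (h (- s)) <= interval_inverse v <= interval_inverse (h s)).
  { rewrite Hlo, Hhi. destruct Hiv; lra. }
  assert (Hdp : derive_pt h (interval_inverse v) (Prf _ Prg) = hp (interval_inverse v)).
  { apply derive_pt_eq_0, Hder. destruct Hiv; lra. }
  apply derivable_pt_lim_replace with (1 / derive_pt h (interval_inverse v) (Prf _ Prg)).
  - apply (derivable_pt_lim_recip_interv h interval_inverse (h (- s)) (h s) v Prf).
    + apply (continuity_pt_recip_interv h interval_inverse (- s) s); [lra| | | | |exact Hv].
      * exact increasing_of_pos_deriv.
      * intros u Hu1 Hu2. apply (interval_inverse_spec u); lra.
      * intros u Hu1 Hu2. apply (interval_inverse_spec u); lra.
      * intros y Hy. eapply continuity_pt_of_derivable_pt_lim; apply Hder, Hy.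
    + destruct Hv; lra.
    + exact Hv.
    + intros u Hu. apply (interval_inverse_spec u), Hu.
    + rewrite Hdp. specialize (Hpos (interval_inverse v)). destruct Hiv; lra.
  - rewrite Hdp. unfold Rdiv; ring.
Qed.

Lemma interval_inverse_smooth : smooth_on (interval_oo (- s) s) hp ->
  smooth_on (interval_oo (h (- s)) (h s)) interval_inverse.
Proof.
  intros Hhp. apply (smooth_on_of_deriv_comp (interval_oo (- s) s) _ (fun y => / hp y)).
  - exact interval_inverse_derivable.
  - intros n. apply Cn_inv; [apply Hhp|]. intros y [Hy1 Hy2].
    assert (0 < hp y) by (apply Hpos; lra). lra.
  - intros v Hv. apply interval_inverse_maps, Hv.
Qed.

End IntervalInverse.

Definition strip (I : R -> Prop) : R2 -> Prop := fun p => I (snd p).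

Lemma open2_strip I : open1 I -> open2 (strip I).
Proof.
  intros HI p Hp. destruct (HI _ Hp) as [e [He H]]. exists e; split; [exact He|].
  intros q _ Hq. apply H, Hq.
Qed.

Lemma cont2_on_of_continuity_2d (U : R2 -> Prop) g :
  (forall p, U p -> continuity_2d_pt (fun u v => g (u, v)) (fst p) (snd p)) -> cont2_on U g.
Proof.
  intros H p Hp eps He. destruct (H p Hp (mkposreal eps He)) as [d Hd].
  exists d; split; [apply cond_pos|]. intros [u v] _ H1 H2. destruct p as [x y]. apply Hd; auto.
Qed.

Lemma continuity_2d_pt_snd_comp (m : R -> R) x y :
  continuity_pt m y -> continuity_2d_pt (fun _ v => m v) x y.
Proof.
  intros Hm. apply (continuity_1d_2d_pt_comp m (fun _ v => v)); [exact Hm|].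
  apply continuity_2d_pt_id2.
Qed.

Lemma smooth2_on_snd I m : open1 I -> smooth_on I m -> smooth2_on (strip I) (fun p => m (snd p)).
Proof.
  intros HI Hm. destruct (smooth_on_deriv_tower I m HI Hm) as [Dm [H0 Hd]].
  exists (fun i j p => match i with O => Dm j (snd p) | S _ => 0 end). split.
  - intros p _; apply H0.
  - intros i j; split.
    + apply cont2_on_of_continuity_2d. intros [x y] Hp. simpl. destruct i.
      * apply continuity_2d_pt_snd_comp. eapply continuity_pt_of_derivable_pt_lim; apply Hd, Hp.
      * apply continuity_2d_pt_const.
    + intros [x y] Hp. unfold has_pdx, has_pdy; simpl.
      destruct i; split; try apply derivable_pt_lim_const. apply Hd, Hp.
Qed.

Lemma smooth2_on_fst_mul_snd I m : open1 I -> smooth_on I m ->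
  smooth2_on (strip I) (fun p => fst p * m (snd p)).
Proof.
  intros HI Hm. destruct (smooth_on_deriv_tower I m HI Hm) as [Dm [H0 Hd]].
  exists (fun i j p => match i with
                       | O => fst p * Dm j (snd p) | 1%nat => Dm j (snd p) | _ => 0 end).
  split.
  - intros p _; rewrite H0; reflexivity.
  - intros i j; split.
    + apply cont2_on_of_continuity_2d. intros [x y] Hp.
      assert (Hc : continuity_pt (Dm j) y)
        by (eapply continuity_pt_of_derivable_pt_lim; apply Hd, Hp).
      destruct i as [|[|i]]; simpl.
      * apply continuity_2d_pt_mult; [apply continuity_2d_pt_id1|].
        apply continuity_2d_pt_snd_comp, Hc.
      * apply continuity_2d_pt_snd_comp, Hc.
      * apply continuity_2d_pt_const.
    + intros [x y] Hp. unfold has_pdx, has_pdy; simpl.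
      destruct i as [|[|i]]; split; try apply derivable_pt_lim_const.
      * apply (derivable_pt_lim_ext (fun t => Dm j y * t)); [intros; ring|].
        apply derivable_pt_lim_replace with (Dm j y * 1); [|ring].
        apply (derivable_pt_lim_scal id), derivable_pt_lim_id.
      * apply (derivable_pt_lim_scal (Dm j)), Hd, Hp.
      * apply Hd, Hp.
Qed.

(* With [hp = h'], the cotangent lift of [h]; this is why it preserves [x dy]. *)
Definition fibre_chart (h hp : R -> R) : R2 -> R2 :=
  fun p => (fst p / hp (snd p), h (snd p)).

Lemma fibre_chart_diffeo_germ (Iu Iv : R -> Prop) h hp G :
  open1 Iu -> open1 Iv -> Iu 0 -> h 0 = 0 ->
  smooth_on Iu h -> smooth_on Iu hp -> (forall y, Iu y -> hp y <> 0) -> smooth_on Iv G ->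
  (forall y, Iu y -> Iv (h y) /\ G (h y) = y) ->
  (forall v, Iv v -> Iu (G v) /\ h (G v) = v) ->
  diffeo_germ (strip Iu) (fibre_chart h hp).
Proof.
  intros HIu HIv HIu0 Hh0 Hh Hhp Hn HG HhG HGh.
  assert (Hinv : smooth_on Iu (fun y => / hp y)) by (intros n; apply Cn_inv; auto).
  split; [apply open2_strip, HIu|]. split; [exact HIu0|].
  split; [unfold fibre_chart, origin; simpl; rewrite Hh0; f_equal; unfold Rdiv; ring|].
  split.
  { split; [exact (smooth2_on_fst_mul_snd Iu _ HIu Hinv)|exact (smooth2_on_snd Iu h HIu Hh)]. }
  exists (strip Iv), (fun q => (fst q * hp (G (snd q)), G (snd q))).
  split; [apply open2_strip, HIv|]. split.
  { split; [apply (smooth2_on_fst_mul_snd Iv (fun v => hp (G v)) HIv)|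
            apply (smooth2_on_snd Iv G HIv HG)].
    intros n. apply (Cn_comp Iu); auto. intros v Hv; apply HGh, Hv. }
  split.
  - intros [x y] Hp. unfold strip, fibre_chart in *; simpl in *.
    destruct (HhG y Hp) as [Hv ->]. split; [exact Hv|]. f_equal. field. auto.
  - intros [u v] Hq. unfold strip, fibre_chart in *; simpl in *.
    destruct (HGh v Hq) as [Hu ->]. split; [exact Hu|]. f_equal. field. auto.
Qed.

Lemma fibre_chart_preserves_liouville I h hp :
  (forall y, I y -> derivable_pt_lim h y (hp y)) -> (forall y, I y -> hp y <> 0) ->
  preserves_liouville_on (strip I) (fibre_chart h hp).
Proof.
  intros Hh Hn [x y] Hp c d Hc Hd. unfold strip, has_pdx, has_pdy, fibre_chart in *; simpl in *.
  assert (Hc0 : c = 0)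
    by (apply (uniqueness_limite (fun _ => h y) x); auto; apply derivable_pt_lim_const).
  assert (Hd0 : d = hp y) by (apply (uniqueness_limite h y); auto).
  subst c d. split; [ring|field; auto].
Qed.

(* The first component reduces to [f' h' + f h'' = a h'], the derivative of
   [f h' = a h]. *)
Lemma fibre_chart_pushforward I h hp f df a : open1 I ->
  (forall y, derivable_pt_lim f y (df y)) ->
  (forall y, I y -> derivable_pt_lim h y (hp y)) -> smooth_on I hp ->
  (forall y, I y -> hp y <> 0) -> (forall y, I y -> f y * hp y = a * h y) ->
  pushforward_eq_on (strip I) (fibre_chart h hp)
    (fun p => (- fst p * df (snd p), f (snd p))) (fun q => (- a * fst q, a * snd q)).
Proof.
  intros HI Hf Hh Hhp Hn Hfh.
  destruct (Hhp 1%nat) as [hpp [Hhpp _]].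
  assert (Hkey : forall y, I y -> df y * hp y + f y * hpp y = a * hp y).
  { intros y Hy. apply (uniqueness_limite (fun y => f y * hp y) y).
    - apply (derivable_pt_lim_mult f hp); auto.
    - apply (derivable_pt_lim_ext_on I (fun y => a * h y)); auto.
      + intros z Hz; symmetry; auto.
      + apply derivable_pt_lim_scal; auto. }
  intros [x y] Hp M [H11 [H12 [H21 H22]]].
  unfold strip, has_pdx, has_pdy, fibre_chart in *; simpl in *.
  assert (E11 : m11 M = / hp y).
  { apply (uniqueness_limite (fun t => t / hp y) x); auto.
    apply (derivable_pt_lim_ext (fun t => / hp y * t)); [intros; unfold Rdiv; ring|].
    apply derivable_pt_lim_replace with (/ hp y * 1); [|ring].
    apply (derivable_pt_lim_scal id), derivable_pt_lim_id. }
  assert (E12 : m12 M = x * (- hpp y / hp y ^ 2)).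
  { apply (uniqueness_limite (fun t => x / hp t) y); auto.
    apply (derivable_pt_lim_scal (fun t => / hp t)), derivable_pt_lim_Rinv_comp; auto. }
  assert (E21 : m21 M = 0).
  { apply (uniqueness_limite (fun _ => h y) x); auto. apply derivable_pt_lim_const. }
  assert (E22 : m22 M = hp y) by (apply (uniqueness_limite h y); auto).
  specialize (Hkey y Hp). specialize (Hfh y Hp). specialize (Hn y Hp).
  unfold mat_apply; simpl. rewrite E11, E12, E21, E22. f_equal.
  - replace (- a * (x / hp y)) with (- x * (df y * hp y + f y * hpp y) / hp y ^ 2)
      by (rewrite Hkey; field; auto).
    field; auto.
  - rewrite Rmult_0_l, Rplus_0_l, Rmult_comm, Hfh. reflexivity.
Qed.

Lemma normal_form_germ (f df : R -> R) : smooth1 f ->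
  (forall y, derivable_pt_lim f y (df y)) -> f 0 = 0 -> df 0 <> 0 ->
  exists (U : R2 -> Prop) (psi : R2 -> R2),
    diffeo_germ U psi /\ preserves_liouville_on U psi /\
    pushforward_eq_on U psi (fun p => (- fst p * df (snd p), f (snd p)))
      (fun q => (- df 0 * fst q, df 0 * snd q)).
Proof.
  intros [Df [HD0 HD]] Hdf Hf0 Ha.
  destruct (hadamard Df HD) as [Gt [HGt [Hfg Hg0]]].
  destruct (hadamard Gt HGt) as [Wt [HWt [Hgw _]]].
  assert (Hfy : forall y, f y = y * Gt O y) by (intros y; rewrite <- !HD0, Hfg, HD0, Hf0; ring).
  assert (Hga : Gt O 0 = df 0).
  { rewrite Hg0. apply (uniqueness_limite f 0); auto.
    apply (derivable_pt_lim_ext (Df O)); auto. }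
  destruct (linearizing_coordinate (Gt O) (Wt O) (df 0)) as [r [h [hp [Hr [Hh0 [Hhp Hh]]]]]];
    auto using smooth_on_tower.
  { intros y; rewrite Hgw, Hga; reflexivity. }
  set (s := r / 2). set (Iu := interval_oo (- s) s).
  assert (Hs : 0 < s) by (unfold s; lra).
  assert (HIu : forall y, - s <= y <= s -> interval_oo (- r) r y)
    by (intros y Hy; unfold interval_oo, s in *; lra).
  assert (Hder : forall y, - s <= y <= s -> derivable_pt_lim h y (hp y))
    by (intros y Hy; apply Hh, HIu, Hy).
  assert (Hpos : forall y, - s <= y <= s -> 0 < hp y) by (intros y Hy; apply Hh, HIu, Hy).
  assert (HIu' : forall y, Iu y -> - s <= y <= s) by (intros y [H1 H2]; lra).
  assert (Hn : forall y, Iu y -> hp y <> 0)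
    by (intros y Hy; specialize (Hpos y (HIu' y Hy)); lra).
  assert (HhpU : smooth_on Iu hp)
    by (apply (smooth_on_subset (interval_oo (- r) r)); auto).
  exists (strip Iu), (fibre_chart h hp). split; [|split].
  - apply (fibre_chart_diffeo_germ Iu (interval_oo (h (- s)) (h s)) h hp (interval_inverse h s)).
    + apply interval_oo_open.
    + apply interval_oo_open.
    + unfold Iu, interval_oo; lra.
    + exact Hh0.
    + apply (smooth_on_antiderivative Iu h hp); auto.
    + exact HhpU.
    + exact Hn.
    + apply (interval_inverse_smooth h hp s); auto.
    + intros y Hy. split; [apply (interval_maps h hp s); auto|].
      apply (interval_inverse_cancel h hp s); auto.
    + intros v Hv. apply (interval_inverse_maps h hp s); auto.
  - apply fibre_chart_preserves_liouville; auto.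
  - apply fibre_chart_pushforward; auto.
    + apply interval_oo_open.
    + intros y Hy. rewrite Hfy. apply Hh, HIu, HIu', Hy.
Qed.

Lemma is_jacobian_unique F p M M' : is_jacobian F p M -> is_jacobian F p M' -> M = M'.
Proof.
  destruct M, M'. intros [H1 [H2 [H3 H4]]] [K1 [K2 [K3 K4]]]; simpl in *.
  f_equal; eapply uniqueness_limite; eauto.
Qed.

(* A real scalar [A] acting on [C] has [lam = l1 + i l2] as eigenvalue only if
   [lam = A]: the equations say [(A - lam) (p1 + i p2) = 0]. *)
Lemma complex_eigenvalue_of_real_scalar A l1 l2 p1 p2 :
  (A - l1) * p1 + l2 * p2 = 0 -> (A - l1) * p2 - l2 * p1 = 0 ->
  (p1, p2) <> (0, 0) -> l1 = A /\ l2 = 0.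
Proof.
  intros H1 H2 Hn.
  assert (Hnorm : forall p, p = p1 \/ p = p2 -> ((A - l1) ^ 2 + l2 ^ 2) * p = 0).
  { intros p [-> | ->].
    - replace (((A - l1) ^ 2 + l2 ^ 2) * p1)
        with ((A - l1) * ((A - l1) * p1 + l2 * p2) - l2 * ((A - l1) * p2 - l2 * p1)) by ring.
      rewrite H1, H2; ring.
    - replace (((A - l1) ^ 2 + l2 ^ 2) * p2)
        with ((A - l1) * ((A - l1) * p2 - l2 * p1) + l2 * ((A - l1) * p1 + l2 * p2)) by ring.
      rewrite H1, H2; ring. }
  assert (Hs : (A - l1) ^ 2 + l2 ^ 2 = 0).
  { destruct (Req_dec p1 0) as [->|Hp1].
    - destruct (Req_dec p2 0) as [->|Hp2]; [contradiction|].
      destruct (Rmult_integral _ _ (Hnorm p2 (or_intror eq_refl))); [auto|contradiction].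
    - destruct (Rmult_integral _ _ (Hnorm p1 (or_introl eq_refl))); [auto|contradiction]. }
  assert (Hsq1 := Rle_0_sqr (A - l1)). assert (Hsq2 := Rle_0_sqr l2).
  unfold Rsqr in *. simpl in Hs.
  assert (Hl1 : (A - l1) * (A - l1) = 0) by lra. assert (Hl2 : l2 * l2 = 0) by lra.
  apply Rmult_integral in Hl1, Hl2. split; [destruct Hl1|destruct Hl2]; lra.
Qed.

Lemma eigenvalue_diag A B lam :
  eigenvalue (mkMat2 A 0 0 B) lam <-> lam = (A, 0) \/ lam = (B, 0).
Proof.
  destruct lam as [l1 l2]. unfold eigenvalue, Defs.Cadd, Defs.Cmul, RtoC; simpl. split.
  - intros [[p1 p2] [[q1 q2] [Hn [E1 E2]]]]. simpl in *.
    injection E1 as E1a E1b. injection E2 as E2a E2b.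
    destruct Hn as [Hn|Hn].
    + left. destruct (complex_eigenvalue_of_real_scalar A l1 l2 p1 p2) as [-> ->]; auto; nra.
    + right. destruct (complex_eigenvalue_of_real_scalar B l1 l2 q1 q2) as [-> ->]; auto; nra.
  - intros [H|H]; injection H as -> ->.
    + exists (1, 0), (0, 0). split; [left; intros H; injection H; lra|].
      split; f_equal; simpl; ring.
    + exists (0, 0), (1, 0). split; [right; intros H; injection H; lra|].
      split; f_equal; simpl; ring.
Qed.

Lemma model_field_jacobian (f df : R -> R) : (forall y, derivable_pt_lim f y (df y)) ->
  is_jacobian (fun p => (- fst p * df (snd p), f (snd p))) origin (mkMat2 (- df 0) 0 0 (df 0)).
Proof.
  intros Hdf. unfold is_jacobian, has_pdx, has_pdy, origin; simpl. repeat split.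
  - apply (derivable_pt_lim_ext (fun t => - df 0 * t)); [intros; ring|].
    apply derivable_pt_lim_replace with (- df 0 * 1); [|ring].
    apply (derivable_pt_lim_scal id), derivable_pt_lim_id.
  - apply (derivable_pt_lim_ext (fun _ => 0)); [intros; ring|]. apply derivable_pt_lim_const.
  - apply derivable_pt_lim_const.
  - apply Hdf.
Qed.

Theorem mainTheorem6 (f df : R -> R)
  (Hf : smooth1 f) (Hdf : forall y, derivable_pt_lim f y (df y)) (Hf0 : f 0 = 0) :
  let X : R2 -> R2 := fun p => (- fst p * df (snd p), f (snd p)) in
  (exists M, is_jacobian X origin M) /\
  (forall M, is_jacobian X origin M ->
     forall lam, eigenvalue M lam <-> lam = (- df 0, 0) \/ lam = (df 0, 0)) /\
  (hyperbolic_zero X origin <-> df 0 <> 0) /\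
  (df 0 <> 0 ->
     let a := df 0 in
     exists (U : R2 -> Prop) (psi : R2 -> R2),
       diffeo_germ U psi /\
       preserves_liouville_on U psi /\
       pushforward_eq_on U psi X (fun q => (- a * fst q, a * snd q))).
Proof.
  intros X.
  assert (Hjac := model_field_jacobian f df Hdf).
  assert (Heig : forall M, is_jacobian X origin M ->
            forall lam, eigenvalue M lam <-> lam = (- df 0, 0) \/ lam = (df 0, 0)).
  { intros M HM. rewrite (is_jacobian_unique X origin M _ HM Hjac). apply eigenvalue_diag. }
  split; [eauto|]. split; [exact Heig|]. split.
  - split.
    + intros [_ [M [HM Hhyp]]]. apply (Hhyp (df 0, 0)), (Heig M HM). now right.
    + intros Ha. split; [unfold X, origin; simpl; f_equal; [ring|exact Hf0]|].
      exists (mkMat2 (- df 0) 0 0 (df 0)). split; [exact Hjac|].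
      intros lam Hl. apply (Heig _ Hjac) in Hl. destruct Hl as [-> | ->]; unfold Cre; simpl; lra.
  - intros Ha. apply normal_form_germ; auto.
Qed.
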